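(* Let $\alpha,\beta\in[0,1)$ and let $\lambda$ be a zero of $\mathcal D(\beta,\cdot)$. Set $\mathcal H(\alpha,\beta,x)=A(\alpha,\beta,\lambda)-A(\alpha,\beta,x)+64\mathcal D(\beta,x)(1-x)$. Then $\lambda$ is a multiple zero of $\mathcal H(\alpha,\beta,\cdot)$ if and only if $$8(\lambda-1)\Big(1-2\big(\lambda^2-2\lambda(3-\lambda)+\tfrac{45}{16}\big)\Big)=\cos(2\pi\alpha).$$
   Context: $A(\alpha,\beta,\lambda)=16\lambda^2-(32+4\cos2\pi\alpha)\lambda+15+4\cos2\pi\alpha+\cos(2\pi(\alpha+\beta))$; $\mathcal D(\beta,\lambda)=-\lambda^3+3\lambda^2-\frac{45}{16}\lambda+\frac{13}{16}-\frac1{32}\cos(2\pi\beta)$. *)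

From HB Require Import structures.
From mathcomp Require Import all_boot all_order all_algebra.
From mathcomp Require Import reals trigo.
Set Implicit Arguments. Unset Strict Implicit. Unset Printing Implicit Defensive.
Import Order.TTheory GRing.Theory Num.Theory.
Local Open Scope ring_scope.

Section Defs.
Variable R : realType.

Definition Apoly (a b : R) : {poly R} :=
  16%:R *: 'X^2 - (32%:R + 4%:R * cos (2%:R * pi * a)) *: 'X
  + (15%:R + 4%:R * cos (2%:R * pi * a) + cos (2%:R * pi * (a + b)))%:P.

Definition Dpoly (b : R) : {poly R} :=
  - 'X^3 + 3%:R *: 'X^2 - (45%:R / 16%:R) *: 'X
  + (13%:R / 16%:R - cos (2%:R * pi * b) / 32%:R)%:P.

Definition A (a b x : R) : R := (Apoly a b).[x].
Definition D (b x : R) : R := (Dpoly b).[x].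

Definition Hpoly (a b lam : R) : {poly R} :=
  (A a b lam)%:P - Apoly a b + 64%:R *: (Dpoly b * (1 - 'X)).

Definition multiple_root (p : {poly R}) (lam : R) : Prop :=
  ('X - lam%:P) ^+ 2 %| p.
End Defs.

(* As D(beta, lam) = 0, lam is a root of H, so it is a multiple root iff
   H'(lam) = 0. Differentiating, H'(lam) = 64 D'(lam)(1 - lam) - A'(lam), and with
   -D'(lam) = lam^2 - 2 lam (3 - lam) + 45/16 this is 4 times the difference of the
   two sides of the claimed identity. *)

From HB Require Import structures.
From mathcomp Require Import all_boot all_order all_algebra.
From mathcomp Require Import reals trigo.
From mathcomp Require Import ring.

Set Implicit Arguments.
Unset Strict Implicit.
Unset Printing Implicit Defensive.
Import Order.TTheory GRing.Theory Num.Theory.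
Local Open Scope ring_scope.

Lemma dvdp_XsubC2_deriv (F : fieldType) (p : {poly F}) (x : F) :
  root p x -> (('X - x%:P) ^+ 2 %| p) = root p^`() x.
Proof.
move/factor_theorem=> [q ->].
rewrite expr2 dvdp_mul2r ?polyXsubC_eq0 // dvdp_XsubCl derivM derivXsubC.
by rewrite /root !hornerE subrr mulr0 add0r.
Qed.

Section Hpoly_derivative.
Variables (R : realType) (a b : R).

Lemma root_Hpoly (lam : R) : D b lam = 0 -> root (Hpoly a b lam) lam.
Proof.
rewrite /root /Hpoly /D /A => Dlam.
by rewrite hornerD hornerZ hornerM Dlam mul0r mulr0 addr0 hornerD hornerN hornerC subrr.
Qed.

Lemma horner_deriv_Apoly (x : R) :
  (Apoly a b)^`().[x] = 32%:R * x - 32%:R - 4%:R * cos (2%:R * pi * a).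
Proof. by rewrite /Apoly !derivE !hornerE; ring. Qed.

(* [hornerE] on the right would unfold [x ^+ 2] into a form [ring] rejects. *)
Lemma horner_deriv_Dpoly (x : R) :
  (Dpoly b)^`().[x] = - 3%:R * x ^+ 2 + 6%:R * x - 45%:R / 16%:R.
Proof. rewrite /Dpoly !derivE; rewrite ![in LHS]hornerE; ring. Qed.

Lemma deriv_Hpoly (lam : R) : (Hpoly a b lam)^`() =
  64%:R *: ((Dpoly b)^`() * (1 - 'X) - Dpoly b) - (Apoly a b)^`().
Proof.
rewrite /Hpoly derivD derivB derivC derivZ derivM derivB derivC derivX.
by rewrite !sub0r mulrN1 addrC.
Qed.

Lemma horner_deriv_Hpoly (lam : R) : D b lam = 0 ->
  (Hpoly a b lam)^`().[lam] =
  4%:R * (cos (2%:R * pi * a) - 8%:R * (lam - 1) *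
    (1 - 2%:R * (lam ^+ 2 - 2%:R * lam * (3%:R - lam) + 45%:R / 16%:R))).
Proof.
move=> Dlam; rewrite deriv_Hpoly hornerD hornerN hornerZ hornerD hornerN hornerM.
rewrite -[(Dpoly b).[lam]]/(D b lam) Dlam horner_deriv_Apoly horner_deriv_Dpoly.
rewrite hornerD hornerN hornerX hornerC; ring.
Qed.
End Hpoly_derivative.

Theorem lemma4p6 (R : realType) (a b lam : R)
  (ha : 0 <= a < 1) (hb : 0 <= b < 1) (hlam : D b lam = 0) :
  multiple_root (Hpoly a b lam) lam <->
  8%:R * (lam - 1) *
    (1 - 2%:R * (lam ^+ 2 - 2%:R * lam * (3%:R - lam) + 45%:R / 16%:R))
  = cos (2%:R * pi * a).
Proof.
rewrite /multiple_root (dvdp_XsubC2_deriv (root_Hpoly a hlam)).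
rewrite /root (horner_deriv_Hpoly a hlam) mulf_eq0 pnatr_eq0 /= subr_eq0.
by split => [/eqP|->].
Qed.
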